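(* Let $f:\mathbb{N}\to[0,\infty)$ be a weakly super-multiplicative function which has a normal order $g:(0,\infty)\to(0,\infty)$ (so $g$ is strictly positive), where $g$ is either non-decreasing or $\log$-uniformly continuous. Then \[ \sup_{n\ge 2}\frac{\log f(n)}{\log n} \;=\; \lim\operatorname{ess}_{n}\frac{\log f(n)}{\log n}, \] i.e. the essential limit on the right exists (possibly equal to $\infty$) and equals the supremum on the left (with the convention $\log 0=-\infty$).
   Context: A function $f:\mathbb{N}\to[0,\infty)$ is weakly super-multiplicative if for all $n\in\mathbb{N}$ and all $\epsilon>0$ there exist $x_0>0$ and $\delta>0$ such that for all real $x>x_0$, $\#\{m\in\mathbb{N}\cap[x,(1+\epsilon)x]: f(nm)\ge(1-\epsilon)f(n)f(m)\}\ge\delta x$. A function $f:\mathbb{N}\to[0,\infty)$ has normal order $g$ if for every $\epsilon>0$ the set $\{n\in\mathbb{N}: |f(n)-g(n)|\ge\epsilon g(n)\}$ has upper (natural) density $0$. A function $g:(0,\infty)\to(0,\infty)$ is $\log$-uniformly continuous if for every $\epsilon>0$ there is $\delta>0$ such that for all $x,y>0$ with $|x/y-1|<\delta$ we have $|g(x)/g(y)-1|<\epsilon$. The essential limit of a sequence $(a_n)$ exists and equals $a\in\mathbb{R}$ if for every $\epsilon>0$ the set $\{n:|a_n-a|>\epsilon\}$ has natural density $0$; it equals $\infty$ if for every $M\in\mathbb{R}$ the set $\{n: a_n<M\}$ has natural density $0$. *)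

From Stdlib Require Import Reals Lra Lia List Classical ClassicalEpsilon.
Import ListNotations.
Open Scope R_scope.

Definition indic (P : Prop) : R :=
  if excluded_middle_informative P then 1 else 0.

Fixpoint cnt (A : nat -> Prop) (N : nat) : R :=
  match N with
  | O => 0
  | S k => cnt A k + indic (A (S k))
  end.

Definition upper_density_zero (A : nat -> Prop) : Prop :=
  forall eps : R, 0 < eps ->
    exists N0 : nat, forall N : nat, (N0 <= N)%nat -> cnt A N / INR N <= eps.

Definition density_zero (A : nat -> Prop) : Prop :=
  Un_cv (fun N => cnt A N / INR N) 0.

(* Weak super-multiplicativity. N = {1,2,...}.  The cardinality bound
   #{...} >= delta*x is expressed by a duplicate-free list of such m. *)
Definition weakly_supermultiplicative (f : nat -> R) : Prop :=
  forall (n : nat) (eps : R), (1 <= n)%nat -> 0 < eps ->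
    exists x0 delta : R, 0 < x0 /\ 0 < delta /\
      forall x : R, x0 < x ->
        exists l : list nat, NoDup l /\
          (forall m, In m l ->
             x <= INR m <= (1 + eps) * x /\
             f (n * m)%nat >= (1 - eps) * f n * f m) /\
          delta * x <= INR (length l).

Definition normal_order (f : nat -> R) (g : R -> R) : Prop :=
  forall eps : R, 0 < eps ->
    upper_density_zero (fun n => (1 <= n)%nat /\
                                 Rabs (f n - g (INR n)) >= eps * g (INR n)).

Definition nondecreasing_pos (g : R -> R) : Prop :=
  forall x y : R, 0 < x -> x <= y -> g x <= g y.

Definition log_uniformly_continuous (g : R -> R) : Prop :=
  forall eps : R, 0 < eps -> exists delta : R, 0 < delta /\
    forall x y : R, 0 < x -> 0 < y -> Rabs (x / y - 1) < delta ->
      Rabs (g x / g y - 1) < eps.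

(* log f(n) / log n, with None standing for -infinity (when f n = 0). *)
Definition logratio (f : nat -> R) (n : nat) : option R :=
  if Rlt_dec 0 (f n) then Some (ln (f n) / ln (INR n)) else None.

Inductive Rinf : Type := Fin (a : R) | PInf.

Definition is_sup_logratio (f : nat -> R) (l : Rinf) : Prop :=
  match l with
  | Fin a =>
      (forall n r, (2 <= n)%nat -> logratio f n = Some r -> r <= a) /\
      (forall eps, 0 < eps -> exists n r,
          (2 <= n)%nat /\ logratio f n = Some r /\ a - eps < r)
  | PInf =>
      forall M, exists n r, (2 <= n)%nat /\ logratio f n = Some r /\ M < r
  end.

Definition is_esslim_logratio (f : nat -> R) (l : Rinf) : Prop :=
  match l with
  | Fin a =>
      forall eps, 0 < eps ->
        density_zero (fun n => (2 <= n)%nat /\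
          match logratio f n with
          | Some r => Rabs (r - a) > eps
          | None => True
          end)
  | PInf =>
      forall M,
        density_zero (fun n => (2 <= n)%nat /\
          match logratio f n with
          | Some r => r < M
          | None => True
          end)
  end.

(* Fix n >= 2 with f(n) > 0 and rho < log f(n) / log n.  Weak super-multiplicativity
   and the normal order produce, for every eps > 0 and every large y, a multiplier
   m in [y, (1+eps) y] with f(nm) >= (1-eps) f(n) f(m) and both m and nm typical,
   i.e. f close to g there.  The regularity of g transfers this to
   g(lam y) >= (1-eps)^3/(1+eps)^2 f(n) g(y) for some lam in [n, (1+eps) n];
   iterating gives g(y) >> y^beta with beta as close to log f(n) / log n as we
   like, in particular beta > rho.  So f(m) < m^rho makes m atypical for large m,
   and the m with log f(m) / log m < rho have density zero.  As no ratio exceeds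
   the supremum, the essential limit is the supremum. *)

From Stdlib Require Import Reals Lra Lia List ZArith Classical ClassicalEpsilon.
Open Scope R_scope.

(** * Counting *)

Lemma indic_bounds (P : Prop) : 0 <= indic P <= 1.
Proof. unfold indic; destruct (excluded_middle_informative P); lra. Qed.

Lemma indic_true (P : Prop) : P -> indic P = 1.
Proof. unfold indic; destruct (excluded_middle_informative P); tauto. Qed.

Lemma indic_false (P : Prop) : ~ P -> indic P = 0.
Proof. unfold indic; destruct (excluded_middle_informative P); tauto. Qed.

Lemma indic_le (P Q : Prop) : (P -> Q) -> indic P <= indic Q.
Proof.
  intro H; unfold indic.
  destruct (excluded_middle_informative P), (excluded_middle_informative Q); tauto || lra.
Qed.

Lemma indic_or (P Q : Prop) : indic (P \/ Q) <= indic P + indic Q.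
Proof.
  unfold indic; destruct (excluded_middle_informative (P \/ Q)),
    (excluded_middle_informative P), (excluded_middle_informative Q); tauto || lra.
Qed.

Lemma cnt_nonneg A N : 0 <= cnt A N.
Proof. induction N; simpl; [lra|]. pose proof (indic_bounds (A (S N))); lra. Qed.

Lemma cnt_subset (A B : nat -> Prop) N : (forall m, A m -> B m) -> cnt A N <= cnt B N.
Proof.
  intro H; induction N; simpl; [lra|].
  pose proof (indic_le (A (S N)) (B (S N)) (H _)); lra.
Qed.

Lemma cnt_union (A B : nat -> Prop) N :
  cnt (fun m => A m \/ B m) N <= cnt A N + cnt B N.
Proof. induction N; simpl; [lra|]. pose proof (indic_or (A (S N)) (B (S N))); lra. Qed.

Lemma cnt_le_N A N K : (N <= K)%nat -> cnt A N <= cnt A K.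
Proof.
  intro H; induction H; [lra|].
  simpl; pose proof (indic_bounds (A (S m))); lra.
Qed.

Lemma cnt_preimage_mul (A : nat -> Prop) n N :
  (1 <= n)%nat -> cnt (fun m => A (n * m)%nat) N <= cnt A (n * N).
Proof.
  intro Hn; induction N as [|N IH].
  - rewrite Nat.mul_0_r; simpl; lra.
  - simpl cnt at 1.
    replace (n * S N)%nat with (S (n * N + (n - 1))) by lia; simpl cnt.
    pose proof (cnt_le_N A (n * N) (n * N + (n - 1)) ltac:(lia)); lra.
Qed.

Lemma cnt_bounded_set (A : nat -> Prop) M N :
  (forall m, A m -> (m <= M)%nat) -> cnt A N <= INR M.
Proof.
  intro H; apply Rle_trans with (INR (Nat.min N M)); [|apply le_INR; lia].
  induction N as [|N IH]; simpl cnt; [simpl; lra|].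
  destruct (Nat.le_gt_cases (S N) M).
  - replace (Nat.min (S N) M) with (S N) in * by lia.
    replace (Nat.min N M) with N in IH by lia.
    rewrite S_INR; pose proof (indic_bounds (A (S N))); lra.
  - rewrite indic_false by (intro HA; specialize (H _ HA); lia).
    apply Rle_trans with (INR (Nat.min N M)); [lra| apply le_INR; lia].
Qed.

Lemma cnt_ge_NoDup (A : nat -> Prop) N l : NoDup l ->
  (forall m, In m l -> (1 <= m <= N)%nat /\ A m) -> INR (length l) <= cnt A N.
Proof.
  revert l; induction N as [|N IH]; intros l Hl H.
  - destruct l as [|a l]; simpl; [lra|].
    destruct (H a (or_introl eq_refl)); lia.
  - simpl cnt; destruct (in_dec Nat.eq_dec (S N) l) as [Hi|Hi].
    + rewrite (indic_true _ (proj2 (H _ Hi))).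
      destruct (in_split _ _ Hi) as [l1 [l2 ->]].
      assert (INR (length (l1 ++ l2)) <= cnt A N).
      { apply IH; [exact (NoDup_remove_1 _ _ _ Hl)|].
        intros m Hm.
        assert (Hne : m <> S N) by (intros ->; exact (NoDup_remove_2 _ _ _ Hl Hm)).
        destruct (H m) as [? ?]; [apply in_app_or in Hm; apply in_or_app; simpl; tauto|].
        split; [lia | auto]. }
      rewrite length_app in *; simpl length.
      rewrite Nat.add_succ_r, S_INR; lra.
    + assert (INR (length l) <= cnt A N).
      { apply IH; [exact Hl|]. intros m Hm.
        destruct (H m Hm) as [? ?].
        assert (m <> S N) by (intros ->; contradiction).
        split; [lia | auto]. }
      pose proof (indic_bounds (A (S N))); lra.
Qed.

Lemma cnt_ge_2 (A : nat -> Prop) N :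
  (forall m, (2 <= m)%nat -> A m) -> INR N - 1 <= cnt A N.
Proof.
  intro H; induction N as [|N IH]; simpl cnt; [simpl; lra|].
  destruct N as [|N].
  - simpl; pose proof (indic_bounds (A 1%nat)); lra.
  - rewrite (indic_true _ (H (S (S N)) ltac:(lia))), S_INR; lra.
Qed.

(** * Real inequalities *)

Lemma Rdiv_le_iff a b e : 0 < a -> (b / a <= e <-> b <= e * a).
Proof.
  intro Ha; replace b with (b / a * a) at 2 by (field; lra); split; intro H.
  - apply Rmult_le_compat_r; lra.
  - apply Rmult_le_reg_r with a; assumption.
Qed.

Lemma Rinv_INR_nonneg N : 0 <= / INR N.
Proof.
  destruct N; [simpl; rewrite Rinv_0; lra|].
  left; apply Rinv_0_lt_compat, lt_0_INR; lia.
Qed.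

Lemma nat_between r : 0 <= r -> exists N : nat, r <= INR N <= r + 1.
Proof.
  intro Hr; destruct (archimed r) as [H1 H2].
  assert (0 < up r)%Z by (apply lt_IZR; simpl; lra).
  exists (Z.to_nat (up r)); rewrite INR_IZR_INZ, Z2Nat.id by lia; lra.
Qed.

Lemma pow_unbounded q B : 1 < q -> exists k, B <= q ^ k.
Proof.
  intro Hq; destruct (Pow_x_infinity q ltac:(rewrite Rabs_right; lra) B) as [k Hk].
  exists k; specialize (Hk k (le_n k)).
  rewrite Rabs_right in Hk by (left; apply pow_lt; lra); lra.
Qed.

Lemma ln_le x y : 0 < x -> x <= y -> ln x <= ln y.
Proof. intros Hx [H|H]; [left; apply ln_increasing | subst]; lra. Qed.

Lemma exp_le x y : x <= y -> exp x <= exp y.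
Proof. intros [H|H]; [left; apply exp_increasing | subst]; lra. Qed.

Lemma ln_1_plus_le x : -1 < x -> ln (1 + x) <= x.
Proof.
  intro Hx; rewrite <- (ln_exp x) at 2; apply ln_le; [lra | apply exp_ineq1_le].
Qed.

(* exp (2e) (1 - e) >= (1 + 2e)(1 - e) = 1 + e (1 - 2e) >= 1 *)
Lemma ln_1_minus_ge e : 0 <= e <= 1 / 2 -> - (2 * e) <= ln (1 - e).
Proof.
  intro He; rewrite <- (ln_exp (- (2 * e))); apply ln_le; [apply exp_pos|].
  rewrite exp_Ropp; pose proof (exp_ineq1_le (2 * e)); pose proof (exp_pos (2 * e)).
  apply Rmult_le_reg_r with (exp (2 * e)); [lra|].
  rewrite Rinv_l by lra; nra.
Qed.

Definition loss (e : R) : R := (1 - e) ^ 3 / (1 + e) ^ 2.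

Lemma loss_pos e : 0 < e < 1 -> 0 < loss e.
Proof. intro He; unfold loss; apply Rdiv_lt_0_compat; apply pow_lt; lra. Qed.

Lemma ln_loss_ge e : 0 < e <= 1 / 2 -> - (8 * e) <= ln (loss e).
Proof.
  intro He; unfold loss, Rdiv.
  rewrite ln_mult, ln_Rinv, !ln_pow
    by (try apply Rinv_0_lt_compat; try apply pow_lt; lra).
  pose proof (ln_1_minus_ge e ltac:(lra)); pose proof (ln_1_plus_le e ltac:(lra)).
  simpl; lra.
Qed.

Lemma loss_bound e F G G' H H' : 0 < e < 1 -> 0 <= F -> 0 <= G' ->
  (1 - e) ^ 2 * F * G' <= (1 + e) * H' -> (1 - e) * G <= G' -> H' <= (1 + e) * H ->
  loss e * F * G <= H.
Proof.
  intros He HF HG' H1 H2 H3; unfold loss.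
  replace ((1 - e) ^ 3 / (1 + e) ^ 2 * F * G)
    with ((1 - e) ^ 2 * F * ((1 - e) * G) / (1 + e) ^ 2) by (field; lra).
  apply Rdiv_le_iff; [nra|].
  assert (0 <= (1 - e) ^ 2 * F) by (apply Rmult_le_pos; [apply pow2_ge_0 | exact HF]).
  assert ((1 - e) ^ 2 * F * ((1 - e) * G) <= (1 - e) ^ 2 * F * G')
    by (apply Rmult_le_compat_l; assumption).
  nra.
Qed.

(* The choice of eps making the exponent ln(loss eps * f n) / ln lam exceed rho. *)
Lemma exponent_gap L theta rho : 0 < L -> rho < theta ->
  exists eps, 0 < eps <= 1 / 2 /\ forall a Lam, L <= Lam <= L + eps ->
    theta * L - 8 * eps <= a -> rho < a / Lam.
Proof.
  intros HL Hrho; set (eta := theta - rho).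
  pose proof (Rabs_pos theta).
  set (eps := Rmin (1 / 2) (eta * L / (2 * (8 + Rabs theta)))).
  assert (Hbound : eps * (8 + Rabs theta) <= eta * L / 2).
  { apply Rle_trans with (eta * L / (2 * (8 + Rabs theta)) * (8 + Rabs theta));
      [apply Rmult_le_compat_r; [lra | apply Rmin_r] | right; field; lra]. }
  exists eps; split.
  { split; [apply Rmin_glb_lt; [lra | apply Rdiv_lt_0_compat; unfold eta; nra]
           | apply Rmin_l]. }
  intros a Lam HLam Ha; apply Rmult_lt_reg_r with Lam; [lra|].
  replace (a / Lam * Lam) with a by (field; lra).
  assert (theta * (Lam - L) <= Rabs theta * eps).
  { apply Rle_trans with (Rabs theta * (Lam - L));
      [apply Rmult_le_compat_r; [lra | apply Rle_abs] | apply Rmult_le_compat_l; lra]. }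
  assert (eta * L <= eta * Lam) by (apply Rmult_le_compat_l; unfold eta; lra).
  assert (0 < eta * L) by (unfold eta; nra).
  replace rho with (theta - eta) by (unfold eta; ring); nra.
Qed.

Lemma power_lower_bound_of_scaling (g : R -> R) X lam A c :
  0 < X -> 1 < lam -> 0 < A -> 0 < c ->
  (forall y, X <= y -> A * g y <= g (lam * y)) ->
  (forall z, X <= z <= lam * X -> c <= g z) ->
  exists C, 0 < C /\ forall y, X <= y -> C * exp (ln A / ln lam * ln y) <= g y.
Proof.
  intros HX Hlam HA Hc Hstep Hbase.
  assert (HL : 0 < ln lam) by (rewrite <- ln_1; apply ln_increasing; lra).
  set (beta := ln A / ln lam).
  set (C := c * exp (- Rabs (ln A) - beta * ln X)).
  set (phi := fun y => C * exp (beta * ln y)).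
  assert (Hphi_base : forall z, X <= z <= lam * X -> phi z <= g z).
  { intros z Hz; apply Rle_trans with c; [|apply Hbase, Hz].
    unfold phi, C; rewrite Rmult_assoc, <- exp_plus.
    rewrite <- (Rmult_1_r c) at 2; apply Rmult_le_compat_l; [lra|].
    rewrite <- exp_0; apply exp_le.
    assert (Ht : 0 <= ln z - ln X <= ln lam).
    { split; [pose proof (ln_le X z HX (proj1 Hz)); lra|].
      pose proof (ln_le z (lam * X) ltac:(lra) (proj2 Hz)) as Hl.
      rewrite ln_mult in Hl by lra; lra. }
    set (t := (ln z - ln X) / ln lam).
    assert (0 <= t <= 1).
    { unfold t; split; [apply Rmult_le_pos; [lra | left; apply Rinv_0_lt_compat; lra]|].
      apply Rdiv_le_iff; lra. }
    replace (- Rabs (ln A) - beta * ln X + beta * ln z) with (ln A * t - Rabs (ln A))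
      by (unfold t, beta; field; lra).
    pose proof (Rle_abs (ln A)); pose proof (Rabs_pos (ln A)); nra. }
  assert (Hphi_step : forall y, 0 < y -> phi (lam * y) = A * phi y).
  { intros y Hy; unfold phi; rewrite ln_mult, Rmult_plus_distr_l, exp_plus by lra.
    replace (beta * ln lam) with (ln A) by (unfold beta; field; lra).
    rewrite exp_ln by lra; ring. }
  assert (Hphi : forall k y, X <= y <= lam ^ S k * X -> phi y <= g y).
  { induction k as [|k IH]; intros y Hy.
    - apply Hphi_base; simpl in Hy; lra.
    - destruct (Rle_lt_dec y (lam * X)) as [Hy1|Hy1]; [apply Hphi_base; lra|].
      replace y with (lam * (y / lam)) by (field; lra).
      assert (Hy' : X <= y / lam <= lam ^ S k * X).
      { split; apply Rmult_le_reg_l with lam; try lra;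
          field_simplify; simpl in Hy |- *; lra. }
      rewrite Hphi_step by lra.
      apply Rle_trans with (A * g (y / lam)); [|apply Hstep; lra].
      apply Rmult_le_compat_l; [lra | apply IH, Hy']. }
  exists C; split; [unfold C; apply Rmult_lt_0_compat; [lra | apply exp_pos]|].
  intros y Hy; destruct (pow_unbounded lam (y / X) Hlam) as [k Hk].
  apply (Hphi k); split; [exact Hy|].
  assert (lam ^ k <= lam ^ S k) by (apply Rle_pow; [lra | lia]).
  apply Rdiv_le_iff in Hk; [|exact HX]; nra.
Qed.

Lemma exp_linear_dominates C rho beta : 0 < C -> rho < beta ->
  exists T, forall t, T <= t -> 2 * exp (rho * t) <= C * exp (beta * t).
Proof.
  intros HC Hb; exists (ln (2 / C) / (beta - rho)); intros t Ht.
  replace (beta * t) with ((beta - rho) * t + rho * t) by ring; rewrite exp_plus.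
  assert (2 / C <= exp ((beta - rho) * t)).
  { rewrite <- (exp_ln (2 / C)) by (apply Rdiv_lt_0_compat; lra); apply exp_le.
    apply Rdiv_le_iff in Ht; [rewrite Rmult_comm; exact Ht | lra]. }
  assert (2 <= C * exp ((beta - rho) * t)).
  { replace 2 with (C * (2 / C)) by (field; lra); apply Rmult_le_compat_l; lra. }
  pose proof (exp_pos (rho * t)); nra.
Qed.

(** * Sets of density zero *)

Lemma upper_density_zero_subset (A B : nat -> Prop) :
  (forall m, A m -> B m) -> upper_density_zero B -> upper_density_zero A.
Proof.
  intros H HB eps he; destruct (HB eps he) as [N0 HN]; exists N0; intros N HN'.
  apply Rle_trans with (2 := HN N HN'); unfold Rdiv.
  apply Rmult_le_compat_r; [apply Rinv_INR_nonneg | apply cnt_subset; auto].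
Qed.

Lemma upper_density_zero_union (A B : nat -> Prop) :
  upper_density_zero A -> upper_density_zero B ->
  upper_density_zero (fun m => A m \/ B m).
Proof.
  intros HA HB eps he.
  destruct (HA (eps / 2) ltac:(lra)) as [N1 H1], (HB (eps / 2) ltac:(lra)) as [N2 H2].
  exists (Nat.max N1 N2); intros N HN.
  specialize (H1 N ltac:(lia)); specialize (H2 N ltac:(lia)).
  apply Rle_trans with (cnt A N / INR N + cnt B N / INR N); [|lra].
  unfold Rdiv; rewrite <- Rmult_plus_distr_r.
  apply Rmult_le_compat_r; [apply Rinv_INR_nonneg | apply cnt_union].
Qed.

Lemma upper_density_zero_bounded M : upper_density_zero (fun m => (m <= M)%nat).
Proof.
  intros eps he; destruct (INR_archimed eps (INR M) he) as [N0 HN0].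
  exists (S N0); intros N HN.
  assert (INR N0 <= INR N) by (apply le_INR; lia).
  apply Rdiv_le_iff; [apply lt_0_INR; lia|].
  apply Rle_trans with (INR M); [apply cnt_bounded_set; auto | nra].
Qed.

Lemma upper_density_zero_preimage_mul (A : nat -> Prop) n : (1 <= n)%nat ->
  upper_density_zero A -> upper_density_zero (fun m => A (n * m)%nat).
Proof.
  intros Hn HA eps he.
  assert (Hn' : 1 <= INR n) by (apply (le_INR 1); exact Hn).
  destruct (HA (eps / INR n) ltac:(apply Rdiv_lt_0_compat; lra)) as [N0 HN0].
  exists (S N0); intros N HN.
  assert (HN1 : 0 < INR N) by (apply lt_0_INR; lia).
  pose proof (HN0 (n * N)%nat ltac:(nia)) as Hc.
  rewrite mult_INR, Rdiv_le_iff in Hc by nra.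
  apply Rdiv_le_iff; [exact HN1|].
  pose proof (cnt_preimage_mul A n N Hn).
  replace (eps / INR n * (INR n * INR N)) with (eps * INR N) in Hc by (field; lra).
  lra.
Qed.

Lemma upper_density_zero_density_zero A : upper_density_zero A -> density_zero A.
Proof.
  intros H eps he; destruct (H (eps / 2) ltac:(lra)) as [N0 HN]; exists N0.
  intros N HN'; specialize (HN N ltac:(lia)).
  unfold R_dist; rewrite Rminus_0_r, Rabs_right; [lra|].
  apply Rle_ge, Rmult_le_pos; [apply cnt_nonneg | apply Rinv_INR_nonneg].
Qed.

Lemma not_upper_density_zero_ge_2 : ~ upper_density_zero (fun m => (2 <= m)%nat).
Proof.
  intro H; destruct (H (1 / 4) ltac:(lra)) as [N0 HN0].
  set (N := Nat.max N0 4).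
  assert (H4 : 4 <= INR N) by (replace 4 with (INR 4) by (simpl; lra); apply le_INR; lia).
  pose proof (cnt_ge_2 (fun m => (2 <= m)%nat) N (fun m Hm => Hm)).
  specialize (HN0 N ltac:(lia)); rewrite Rdiv_le_iff in HN0 by lra; lra.
Qed.

Lemma upper_density_zero_sparse (B : nat -> Prop) delta eps :
  upper_density_zero B -> 0 < delta -> 0 < eps ->
  exists X, 0 < X /\ forall x l, X < x -> NoDup l ->
    (forall m, In m l -> x <= INR m <= (1 + eps) * x /\ B m) ->
    INR (length l) < delta * x.
Proof.
  intros HB hd he.
  set (tau := delta / (4 * (1 + eps))).
  assert (htau : 0 < tau) by (apply Rdiv_lt_0_compat; lra).
  destruct (HB tau htau) as [N0 HN0].
  exists (Rmax 1 (INR N0)); split; [pose proof (Rmax_l 1 (INR N0)); lra|].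
  intros x l Hx Hl Hin.
  pose proof (Rmax_l 1 (INR N0)); pose proof (Rmax_r 1 (INR N0)).
  destruct (nat_between ((1 + eps) * x)) as [N [HN1 HN2]]; [nra|].
  assert (HN0N : (N0 <= N)%nat) by (apply INR_le; nra).
  assert (Hcnt : INR (length l) <= cnt B N).
  { apply cnt_ge_NoDup; [exact Hl|]. intros m Hm.
    destruct (Hin m Hm) as [[Hm1 Hm2] HBm]; repeat split; auto.
    - apply INR_lt with (n := 0%nat); simpl; lra.
    - apply INR_le; lra. }
  pose proof (HN0 N HN0N) as Hd; rewrite Rdiv_le_iff in Hd by nra.
  assert (tau * INR N <= delta * x / 2); [|nra].
  apply Rle_trans with (tau * (2 * (1 + eps) * x)); [apply Rmult_le_compat_l; nra|].
  right; unfold tau; field; lra.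
Qed.

(** * Growth of the normal order *)

Definition deviates (f : nat -> R) (g : R -> R) (eps : R) (k : nat) : Prop :=
  (1 <= k)%nat /\ Rabs (f k - g (INR k)) >= eps * g (INR k).

Lemma not_deviates f g eps k : (1 <= k)%nat -> ~ deviates f g eps k ->
  Rabs (f k - g (INR k)) < eps * g (INR k).
Proof. intros Hk H; apply Rnot_ge_lt; intro; apply H; split; assumption. Qed.

Lemma supermultiplicative_transfer (f : nat -> R) (g : R -> R) n m e :
  0 < e < 1 -> 0 <= f n ->
  f (n * m)%nat >= (1 - e) * f n * f m ->
  Rabs (f m - g (INR m)) < e * g (INR m) ->
  Rabs (f (n * m)%nat - g (INR (n * m))) < e * g (INR (n * m)) ->
  (1 - e) ^ 2 * f n * g (INR m) <= (1 + e) * g (INR (n * m)).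
Proof.
  intros He Hfn Hsm Hm Hnm; apply Rabs_def2 in Hm, Hnm.
  assert (0 <= (1 - e) * f n) by (apply Rmult_le_pos; lra).
  assert ((1 - e) * f n * ((1 - e) * g (INR m)) <= (1 - e) * f n * f m)
    by (apply Rmult_le_compat_l; lra).
  nra.
Qed.

Section Growth.

Variables (f : nat -> R) (g : R -> R).
Hypothesis hf : forall n, 0 <= f n.
Hypothesis hg : forall x, 0 < x -> 0 < g x.
Hypothesis hwsm : weakly_supermultiplicative f.
Hypothesis hno : normal_order f g.

(* Since both the exceptional set of the normal order and its dilate by n have
   density zero, they cannot swallow the delta*x multipliers m supplied by weak
   super-multiplicativity. *)
Lemma good_multiplier n eps : (1 <= n)%nat -> 0 < eps ->
  exists X, 0 < X /\ forall x, X < x -> exists m : nat,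
    x <= INR m <= (1 + eps) * x /\
    f (n * m)%nat >= (1 - eps) * f n * f m /\
    Rabs (f m - g (INR m)) < eps * g (INR m) /\
    Rabs (f (n * m)%nat - g (INR (n * m))) < eps * g (INR (n * m)).
Proof.
  intros Hn he.
  destruct (hwsm n eps Hn he) as [x0 [delta [Hx0 [Hd Hl]]]].
  set (B := fun m => deviates f g eps m \/ deviates f g eps (n * m)).
  assert (HB : upper_density_zero B).
  { apply upper_density_zero_union; [exact (hno eps he)|].
    exact (upper_density_zero_preimage_mul _ n Hn (hno eps he)). }
  destruct (upper_density_zero_sparse B delta eps HB Hd he) as [X1 [HX1 Hsparse]].
  exists (Rmax x0 X1); split; [pose proof (Rmax_l x0 X1); lra|].
  intros x Hx; pose proof (Rmax_l x0 X1); pose proof (Rmax_r x0 X1).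
  destruct (Hl x ltac:(lra)) as [l [Hnd [Hin Hlen]]].
  destruct (classic (exists m, In m l /\ ~ B m)) as [[m [Hm HnB]] | Hall].
  - destruct (Hin m Hm) as [Hrange Hsm].
    assert (Hm1 : (0 < m)%nat) by (apply INR_lt; simpl; lra).
    exists m; repeat split; try tauto.
    + apply not_deviates; [exact Hm1 | intro; apply HnB; left; assumption].
    + apply not_deviates; [lia | intro; apply HnB; right; assumption].
  - exfalso.
    assert (INR (length l) < delta * x); [|lra].
    apply Hsparse; [lra | exact Hnd|].
    intros m Hm; split; [apply Hin, Hm|].
    apply NNPP; intro; apply Hall; exists m; auto.
Qed.

Lemma growth_step_nondecreasing n eps :
  nondecreasing_pos g -> (1 <= n)%nat -> 0 < eps < 1 ->
  exists X, 0 < X /\ forall y, X <= y ->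
    loss eps * f n * g y <= g ((1 + eps) * INR n * y).
Proof.
  intros hnd Hn He; pose proof (hf n) as Hfn.
  assert (Hn1 : 1 <= INR n) by (apply (le_INR 1); exact Hn).
  destruct (good_multiplier n eps Hn (proj1 He)) as [X [HX HG]].
  exists (X + 1); split; [lra|]; intros y Hy.
  destruct (HG y ltac:(lra)) as [m [[Hm1 Hm2] [Hsm [Hdm Hdnm]]]].
  assert (Hglam : 0 < g ((1 + eps) * INR n * y)) by (apply hg; nra).
  apply loss_bound with (G' := g (INR m)) (H' := g (INR (n * m))); try lra.
  - left; apply hg; lra.
  - exact (supermultiplicative_transfer f g n m eps He Hfn Hsm Hdm Hdnm).
  - assert (g y <= g (INR m)) by (apply hnd; lra).
    assert (0 < g y) by (apply hg; lra); nra.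
  - assert (g (INR (n * m)) <= g ((1 + eps) * INR n * y)); [|nra].
    apply hnd; rewrite mult_INR; nra.
Qed.

Lemma log_uniformly_continuous_half :
  log_uniformly_continuous g ->
  exists q, 1 < q /\ forall z z', 0 < z' -> z' <= z <= q * z' -> g z' / 2 <= g z.
Proof.
  intro hl; destruct (hl (1 / 2) ltac:(lra)) as [d [Hd Hdl]].
  exists (1 + d / 2); split; [lra|]; intros z z' Hz' Hz.
  assert (Hr : 1 <= z / z' <= 1 + d / 2)
    by (split; apply Rmult_le_reg_r with z'; try lra; field_simplify; lra).
  specialize (Hdl z z' ltac:(lra) ltac:(lra) ltac:(rewrite Rabs_right; lra)).
  apply Rabs_def2 in Hdl.
  assert (Hgz' : 0 < g z') by (apply hg; lra).
  replace (g z) with (g z / g z' * g z') by (field; lra); nra.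
Qed.

Lemma log_uniformly_continuous_lower_bound X B :
  log_uniformly_continuous g -> 0 < X ->
  exists c, 0 < c /\ forall z, X <= z <= B -> c <= g z.
Proof.
  intros hl HX; destruct (log_uniformly_continuous_half hl) as [q [Hq Hhalf]].
  assert (Hpow : forall j z, X <= z <= X * q ^ j -> g X / 2 ^ j <= g z).
  { induction j as [|j IH]; intros z Hz.
    - simpl in *; replace z with X by lra; lra.
    - set (z' := Rmax X (z / q)).
      assert (HXz' : X <= z') by apply Rmax_l.
      assert (Hqj : 1 <= q ^ j) by (apply pow_R1_Rle; lra).
      assert (Hzq : z / q <= X * q ^ j)
        by (apply Rmult_le_reg_r with q; [lra|]; simpl in Hz; field_simplify; lra).
      assert (Hz'q : z <= q * z')
        by (apply Rle_trans with (q * (z / q)); [right; field; lra|];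
            apply Rmult_le_compat_l; [lra | apply Rmax_r]).
      assert (Hz'z : z' <= z)
        by (apply Rmax_lub; [lra|]; apply Rmult_le_reg_r with q; [lra|];
            field_simplify; simpl in Hz; nra).
      pose proof (IH z' ltac:(split; [exact HXz' | apply Rmax_lub; nra])).
      pose proof (Hhalf z z' ltac:(lra) ltac:(lra)).
      simpl; replace (g X / (2 * 2 ^ j)) with (g X / 2 ^ j / 2)
        by (field; apply pow_nonzero; lra); lra. }
  destruct (pow_unbounded q (B / X) Hq) as [j Hj].
  exists (g X / 2 ^ j); split; [apply Rdiv_lt_0_compat; [apply hg | apply pow_lt]; lra|].
  intros z Hz; apply (Hpow j); split; [lra|].
  apply Rle_trans with B; [lra|].
  apply Rmult_le_reg_r with (/ X); [apply Rinv_0_lt_compat; lra|].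
  replace (X * q ^ j * / X) with (q ^ j) by (field; lra); unfold Rdiv in Hj; lra.
Qed.

Lemma growth_step_log_uniformly_continuous n eps :
  log_uniformly_continuous g -> (1 <= n)%nat -> 0 < eps < 1 ->
  exists X, 0 < X /\ forall y, X <= y -> loss eps * f n * g y <= g (INR n * y).
Proof.
  intros hl Hn He; pose proof (hf n) as Hfn.
  assert (Hn1 : 1 <= INR n) by (apply (le_INR 1); exact Hn).
  destruct (hl eps (proj1 He)) as [d [Hd Hdl]].
  set (e := Rmin eps (d / 2)).
  assert (He' : 0 < e <= eps /\ e <= d / 2)
    by (unfold e; repeat split; [apply Rmin_glb_lt | apply Rmin_l | apply Rmin_r]; lra).
  destruct (good_multiplier n e Hn ltac:(lra)) as [X [HX HG]].
  exists (X + 1); split; [lra|]; intros y Hy.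
  destruct (HG y ltac:(lra)) as [m [[Hm1 Hm2] [Hsm [Hdm Hdnm]]]].
  assert (Hmy : Rabs (INR m / y - 1) < d).
  { assert (1 <= INR m / y <= 1 + e)
      by (split; apply Rmult_le_reg_r with y; try lra; field_simplify; lra).
    rewrite Rabs_right; lra. }
  assert (Hgm : 0 < g (INR m)) by (apply hg; lra).
  assert (Hgny : 0 < g (INR n * y)) by (apply hg; nra).
  pose proof (Hdl (INR m) y ltac:(lra) ltac:(lra) Hmy) as Hratio_m.
  pose proof (Hdl (INR (n * m)) (INR n * y) ltac:(rewrite mult_INR; nra) ltac:(nra)
    ltac:(rewrite mult_INR; replace (INR n * INR m / (INR n * y)) with (INR m / y)
          by (field; lra); exact Hmy)) as Hratio_nm.
  apply Rabs_def2 in Hratio_m, Hratio_nm.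
  apply loss_bound with (G' := g (INR m)) (H' := g (INR (n * m))); try lra.
  - pose proof (supermultiplicative_transfer f g n m e ltac:(lra) Hfn Hsm Hdm Hdnm).
    assert ((1 - eps) ^ 2 <= (1 - e) ^ 2) by (apply pow_incr; lra).
    assert (0 < g (INR (n * m))) by (apply hg; rewrite mult_INR; nra).
    assert (0 <= f n * g (INR m)) by (apply Rmult_le_pos; lra).
    nra.
  - assert (0 < g y) by (apply hg; lra).
    replace (g (INR m)) with (g (INR m) / g y * g y) by (field; lra); nra.
  - replace (g (INR (n * m))) with (g (INR (n * m)) / g (INR n * y) * g (INR n * y))
      by (field; lra); nra.
Qed.

Hypothesis hreg : nondecreasing_pos g \/ log_uniformly_continuous g.

Lemma growth_step n eps : (1 <= n)%nat -> 0 < eps < 1 ->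
  exists X lam c, 0 < X /\ INR n <= lam <= (1 + eps) * INR n /\ 0 < c /\
    (forall y, X <= y -> loss eps * f n * g y <= g (lam * y)) /\
    (forall z, X <= z <= lam * X -> c <= g z).
Proof.
  intros Hn He.
  assert (Hn1 : 1 <= INR n) by (apply (le_INR 1); exact Hn).
  destruct hreg as [hnd | hl].
  - destruct (growth_step_nondecreasing n eps hnd Hn He)
      as [X [HX Hstep]].
    exists X, ((1 + eps) * INR n), (g X); repeat split; try nra; auto.
    intros z Hz; apply hnd; lra.
  - destruct (growth_step_log_uniformly_continuous n eps hl Hn He)
      as [X [HX Hstep]].
    destruct (log_uniformly_continuous_lower_bound X (INR n * X) hl HX)
      as [c [Hc Hbase]].
    exists X, (INR n), c; repeat split; auto; nra.
Qed.

Lemma g_power_lower_bound n rho :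
  (2 <= n)%nat -> 0 < f n -> rho < ln (f n) / ln (INR n) ->
  exists beta C X, rho < beta /\ 0 < C /\ 0 < X /\
    forall y, X <= y -> C * exp (beta * ln y) <= g y.
Proof.
  intros Hn Hfn Hrho.
  assert (Hn2 : 2 <= INR n) by (apply (le_INR 2); exact Hn).
  assert (HL : 0 < ln (INR n)) by (rewrite <- ln_1; apply ln_increasing; lra).
  destruct (exponent_gap (ln (INR n)) _ rho HL Hrho) as [eps [He Hgap]].
  destruct (growth_step n eps ltac:(lia) ltac:(lra))
    as [X [lam [c [HX [Hlam [Hc [Hstep Hbase]]]]]]].
  set (A := loss eps * f n) in Hstep.
  assert (HA : 0 < A) by (apply Rmult_lt_0_compat; [apply loss_pos; lra | exact Hfn]).
  destruct (power_lower_bound_of_scaling g X lam A c HX ltac:(lra) HA Hc Hstep Hbase)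
    as [C [HC Hpow]].
  exists (ln A / ln lam), C, X; repeat split; auto.
  apply Hgap.
  - split; [apply ln_le; lra|].
    apply Rle_trans with (ln ((1 + eps) * INR n)); [apply ln_le; lra|].
    rewrite ln_mult by lra; pose proof (ln_1_plus_le eps ltac:(lra)); lra.
  - unfold A; rewrite ln_mult by (try apply loss_pos; lra).
    pose proof (ln_loss_ge eps He).
    replace (ln (f n) / ln (INR n) * ln (INR n)) with (ln (f n)) by (field; lra); lra.
Qed.

(* Eventually g m >= 2 m^rho, so f m < m^rho forces |f m - g m| >= g m / 2. *)
Lemma small_values_sparse n rho :
  (2 <= n)%nat -> 0 < f n -> rho < ln (f n) / ln (INR n) ->
  upper_density_zero (fun m => (2 <= m)%nat /\ f m < exp (rho * ln (INR m))).
Proof.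
  intros Hn Hfn Hrho.
  destruct (g_power_lower_bound n rho Hn Hfn Hrho) as [beta [C [X [Hb [HC [HX Hpow]]]]]].
  destruct (exp_linear_dominates C rho beta HC Hb) as [T HT].
  destruct (INR_unbounded (Rmax X (exp T))) as [M HM].
  pose proof (Rmax_l X (exp T)); pose proof (Rmax_r X (exp T)).
  apply upper_density_zero_subset with
    (B := fun m => deviates f g (1 / 2) m \/ (m <= M)%nat).
  2: { apply upper_density_zero_union;
       [exact (hno (1 / 2) ltac:(lra)) | apply upper_density_zero_bounded]. }
  intros m [Hm Hfm]; destruct (Nat.le_gt_cases m M) as [|HmM]; [right; assumption|left].
  apply lt_INR in HmM.
  assert (HlnT : T <= ln (INR m))
    by (rewrite <- (ln_exp T); apply ln_le; [apply exp_pos | lra]).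
  pose proof (HT _ HlnT); pose proof (Hpow (INR m) ltac:(lra)).
  split; [lia|]; rewrite Rabs_minus_sym; apply Rle_ge.
  apply Rle_trans with (g (INR m) - f m); [lra | apply Rle_abs].
Qed.

End Growth.

(** * Supremum and essential limit *)

Lemma logratio_Some f n r :
  logratio f n = Some r -> 0 < f n /\ r = ln (f n) / ln (INR n).
Proof. unfold logratio; destruct (Rlt_dec 0 (f n)); intro H; inversion H; auto. Qed.

Lemma logratio_pos f n : 0 < f n -> logratio f n = Some (ln (f n) / ln (INR n)).
Proof. unfold logratio; destruct (Rlt_dec 0 (f n)); [reflexivity | lra]. Qed.

Lemma logratio_below f m rho : (forall k, 0 <= f k) -> (2 <= m)%nat ->
  match logratio f m with Some r => r < rho | None => True end ->
  f m < exp (rho * ln (INR m)).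
Proof.
  intros hf Hm H.
  assert (Hm2 : 2 <= INR m) by (apply (le_INR 2); exact Hm).
  assert (HL : 0 < ln (INR m)) by (rewrite <- ln_1; apply ln_increasing; lra).
  destruct (Rlt_dec 0 (f m)) as [Hp|Hp].
  - rewrite logratio_pos in H by exact Hp.
    rewrite <- (exp_ln (f m)) by exact Hp; apply exp_increasing.
    apply Rmult_lt_compat_r with (r := ln (INR m)) in H; [|exact HL].
    replace (ln (f m) / ln (INR m) * ln (INR m)) with (ln (f m)) in H by (field; lra).
    lra.
  - pose proof (hf m); pose proof (exp_pos (rho * ln (INR m))); lra.
Qed.

(* If f vanished on all n >= 2, every such n would be exceptional for the normal order. *)
Lemma logratio_defined_somewhere f g :
  (forall n, 0 <= f n) -> (forall x, 0 < x -> 0 < g x) -> normal_order f g ->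
  exists n r, (2 <= n)%nat /\ logratio f n = Some r.
Proof.
  intros hf hg hno; apply NNPP; intro Hnone.
  apply not_upper_density_zero_ge_2.
  apply upper_density_zero_subset with (2 := hno (1 / 2) ltac:(lra)).
  intros n Hn; split; [lia|].
  assert (Hfn : f n = 0).
  { destruct (Rlt_dec 0 (f n)) as [Hp|Hp]; [|pose proof (hf n); lra].
    exfalso; apply Hnone; exists n, (ln (f n) / ln (INR n)).
    split; [exact Hn | apply logratio_pos, Hp]. }
  assert (0 < g (INR n)) by (apply hg, lt_0_INR; lia).
  rewrite Hfn, Rminus_0_l, Rabs_Ropp, Rabs_right; lra.
Qed.

Lemma exists_sup_logratio f :
  (exists n r, (2 <= n)%nat /\ logratio f n = Some r) ->
  exists l, is_sup_logratio f l.
Proof.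
  intro Hne.
  set (E := fun r => exists n, (2 <= n)%nat /\ logratio f n = Some r).
  destruct (classic (bound E)) as [Hb|Hnb].
  - destruct Hne as [n [r Hr]].
    destruct (completeness E Hb (ex_intro _ r (ex_intro _ n Hr))) as [a [Hub Hlub]].
    exists (Fin a); split.
    + intros m s Hm Hs; apply Hub; exists m; auto.
    + intros eps he; apply NNPP; intro Hc.
      assert (Hbound : is_upper_bound E (a - eps)); [|specialize (Hlub _ Hbound); lra].
      intros s [m Hm]; apply Rnot_lt_le; intro; apply Hc; exists m, s; tauto.
  - exists PInf; intro M; apply NNPP; intro Hc; apply Hnb; exists M.
    intros s [m Hm]; apply Rnot_lt_le; intro; apply Hc; exists m, s; tauto.
Qed.

Lemma esslim_of_sup f l :
  (forall n r rho, (2 <= n)%nat -> logratio f n = Some r -> rho < r ->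
     upper_density_zero (fun m => (2 <= m)%nat /\
       match logratio f m with Some s => s < rho | None => True end)) ->
  is_sup_logratio f l -> is_esslim_logratio f l.
Proof.
  intros Hsparse; destruct l as [a|]; simpl.
  - intros [Hub Happrox] eps he.
    destruct (Happrox eps he) as [n [r [Hn [Hr Hlt]]]].
    apply upper_density_zero_density_zero.
    apply upper_density_zero_subset with (2 := Hsparse n r (a - eps) Hn Hr Hlt).
    intros m [Hm Hfar]; split; [exact Hm|].
    destruct (logratio f m) as [s|] eqn:Hs; [|exact I].
    pose proof (Hub m s Hm Hs); rewrite Rabs_left1 in Hfar by lra; lra.
  - intros Hunb M; destruct (Hunb M) as [n [r [Hn [Hr Hlt]]]].
    exact (upper_density_zero_density_zero _ (Hsparse n r M Hn Hr Hlt)).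
Qed.

Theorem theorem1 (f : nat -> R) (g : R -> R)
  (hf : forall n, 0 <= f n)
  (hg : forall x, 0 < x -> 0 < g x)
  (hwsm : weakly_supermultiplicative f)
  (hno : normal_order f g)
  (hreg : nondecreasing_pos g \/ log_uniformly_continuous g) :
  exists l : Rinf, is_sup_logratio f l /\ is_esslim_logratio f l.
Proof.
  destruct (exists_sup_logratio f (logratio_defined_somewhere f g hf hg hno)) as [l Hl].
  exists l; split; [exact Hl|].
  apply (esslim_of_sup f l); [|exact Hl].
  intros n r rho Hn Hr Hrho; destruct (logratio_Some f n r Hr) as [Hfn ->].
  apply upper_density_zero_subset
    with (2 := small_values_sparse f g hf hg hwsm hno hreg n rho Hn Hfn Hrho).
  intros m [Hm Hbelow]; split; [exact Hm | apply (logratio_below f m rho hf Hm Hbelow)].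
Qed.
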